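(* Assume the Setup and Matrix Notation below. For all $i,j\in I$ let $Z_{ij}=\begin{pmatrix}P_{ij}&Q_{ij}\\R_{ij}&S_{ij}\end{pmatrix}$ be $r\times r$ matrices over $\mathcal O_X(U_i\cap U_j)$ (blocks of sizes $(r-2)\times(r-2)$, $(r-2)\times2$, $2\times(r-2)$, $2\times2$) with $M_i=Z_{ij}M_j$ and $S_{ij}=(-1)^{t_j}s_{jt_i}A_{ij}$, and for $i,j,k\in I$ let $\beta_{ijk}=(\beta_{ijk1},\dots,\beta_{ijk,r-1})^T$ be the (uniquely determined) regular functions on $U_i\cap U_j\cap U_k$ such that $Z_{ik}-Z_{ij}Z_{jk}=(0\ \ B_{ijk})$ with $B_{ijk}=(\beta_{ijk1},\dots,\widehat{\beta_{ijkt_i}},\dots,\beta_{ijk,r-1},\beta_{ijkt_i}f_i,\beta_{ijkt_i}g_i)^T(g_k,-f_k)$. Then the $(r-1)$-tuples $(-1)^{t_k}{T'_i}^{-1}\beta_{ijk}$ define a Čech $2$-cocycle of the vector bundle $L^{*}\oplus\dots\oplus L^*$ ($r-1$ copies) with respect to the cover $\{U_i\}$; explicitly, for all $i,j,k,l\in I$, on $U_i\cap U_j\cap U_k\cap U_l$: $$(-1)^{t_l}{T'_j}^{-1}\beta_{jkl}-(-1)^{t_l}{T'_i}^{-1}\beta_{ikl}+(-1)^{t_l}{T'_i}^{-1}\beta_{ijl}-(-1)^{t_k}h_{kl}{T'_i}^{-1}\beta_{ijk}=0.$$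
   Context: Setup. $k$ is an algebraically closed field, $X$ a smooth irreducible algebraic variety over $k$, $Y\subset X$ a local complete intersection subscheme of codimension two with ideal sheaf $\mathcal J$ and normal bundle $N$, $L$ a line bundle on $X$, $r\ge 2$ an integer, and $s_1,\dots,s_{r-1}$ global sections generating $\bigwedge^2N\otimes L^*|_Y$. A bar denotes the class modulo the ideal of $Y$. $\{U_i\}_{i\in I}$ is a cover of $X$ by affine open sets such that: (a) $L|_{U_i}$ is trivial, with transition functions $h_{ij}\in\mathcal O_X(U_i\cap U_j)^\times$, $h_{ij}h_{jk}=h_{ik}$; (b) $f_i,g_i\in\mathcal O_X(U_i)$ generate $\mathcal J(U_i)$ (with $f_i=1,g_i=0$ if $Y\cap U_i=\emptyset$), and for every affine open $V\subseteq U_i$ and $u,v\in\mathcal O_X(V)$ with $uf_i=vg_i$ there is $w\in\mathcal O_X(V)$ with $u=wg_i$, $v=wf_i$; (c) for all $i,j$, $A_{ij}$ is a $2\times2$ matrix over $\mathcal O_X(U_i\cap U_j)$ with $(f_i,g_i)^T=A_{ij}(f_j,g_j)^T$; (d) $s_{it}\in\mathcal O_X(U_i)$ ($t=1,\dots,r-1$) satisfy $\bar s_{it}=\frac{\det\bar A_{ij}}{\bar h_{ij}}\bar s_{jt}$ on $Y\cap U_i\cap U_j$ (they represent $s_t$ locally); (e) there are indices $t_i\in\{1,\dots,r-1\}$ with $s_{it_i}=(-1)^{t_i}$, and for all $i,j$ the function $s_{jt_i}$ is a unit on $U_i\cap U_j$ and $\det A_{ij}=(-1)^{t_i}h_{ij}/s_{jt_i}$.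 Matrix Notation. $\Delta_t$ is the identity matrix (size clear from context) with its $t$-th row removed and $\Delta'_t$ its transpose; thus $\Delta_tM$ is $M$ without its $t$-th row and $M\Delta'_t$ is $M$ without its $t$-th column. $\mathbf s_i=(s_{i1},\dots,s_{i,r-1})^T$. $T'_i$ is the $(r-1)\times(r-1)$ matrix equal to the identity except for its $t_i$-th column, whose $t_i$-th entry is $1$ and whose $t$-th entry is $-(-1)^{t_i}s_{it}$ for $t\ne t_i$. $T''_i$ is the $2\times(r-1)$ matrix whose $t_i$-th column is $(f_i,g_i)^T$ and whose other columns are zero. $M_i=\begin{pmatrix}\Delta_{t_i}T'_i\\ T''_i\end{pmatrix}$ (an $r\times(r-1)$ matrix). $P_{ij}=\Delta_{t_i}T'_i\Delta'_{t_j}$. A hat denotes omission of an entry. *)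

From HB Require Import structures.
From mathcomp Require Import all_boot all_order all_algebra.
Set Implicit Arguments. Unset Strict Implicit. Unset Printing Implicit Defensive.
Import GRing.Theory.
Local Open Scope ring_scope.

(* Model of the structure sheaf of an irreducible variety X:
   for an open set U (a predicate on the points of X), O_X(U) is the
   subring [reg U] of the function field K (restriction = identity).
   [affine U] marks affine open subsets. *)
Record ratsheaf (K : fieldType) (X : Type) := RatSheaf {
  reg : (X -> Prop) -> K -> Prop;
  affine : (X -> Prop) -> Prop;
  reg0 : forall U, reg U 0;
  reg1 : forall U, reg U 1;
  regD : forall U a b, reg U a -> reg U b -> reg U (a + b);
  regN : forall U a, reg U a -> reg U (- a);
  regM : forall U a b, reg U a -> reg U b -> reg U (a * b);
  reg_sub : forall (U V : X -> Prop) a,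
      (forall x, V x -> U x) -> reg U a -> reg V a
}.

Definition regunit K X (S : ratsheaf K X) (U : X -> Prop) (a : K) :=
  reg S U a /\ a != 0 /\ reg S U a^-1.

Definition cap2 X (U V : X -> Prop) : X -> Prop := fun x => U x /\ V x.
Definition cap3 X (U V W : X -> Prop) : X -> Prop := fun x => U x /\ V x /\ W x.
Definition cap4 X (U V W T : X -> Prop) : X -> Prop :=
  fun x => U x /\ V x /\ W x /\ T x.

Definition regmx K X (S : ratsheaf K X) (U : X -> Prop) m n (A : 'M[K]_(m, n)) :=
  forall a b, reg S U (A a b).

(* Indices t in {1,...,r-1} are represented 0-based by t : 'I_(r-1).
   sgn t = (-1)^(1-based index of t). *)
Definition sgn {K : fieldType} {m} (t : 'I_m) : K := (-1) ^+ (t.+1).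

Definition fg {K : fieldType} (f g : K) : 'cV[K]_2 :=
  \col_(a < 2) (if a == 0 then f else g).
Definition gmf {K : fieldType} (f g : K) : 'rV[K]_2 :=
  \row_(a < 2) (if a == 0 then g else - f).

Section MatrixNotation.
Variables (K : fieldType) (n : nat).
(* r = n + 2, r - 1 = n.+1, r - 2 = n *)

Definition Delta (t : 'I_n.+1) : 'M[K]_(n, n.+1) := row' t 1%:M.
Definition Delta' (t : 'I_n.+1) : 'M[K]_(n.+1, n) := (Delta t)^T.

Definition Tp (t : 'I_n.+1) (s : 'I_n.+1 -> K) : 'M[K]_n.+1 :=
  \matrix_(a, b) (if b == t then (if a == t then 1 else - (sgn t * s a))
                  else (a == b)%:R).

Definition Tpp (t : 'I_n.+1) (f g : K) : 'M[K]_(2, n.+1) :=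
  \matrix_(a, b) (if b == t then fg f g a 0 else 0).

Definition Mmx (t : 'I_n.+1) (s : 'I_n.+1 -> K) (f g : K) : 'M[K]_(n + 2, n.+1) :=
  col_mx (Delta t *m Tp t s) (Tpp t f g).

Definition Pmx (ti tj : 'I_n.+1) (si : 'I_n.+1 -> K) : 'M[K]_n :=
  Delta ti *m Tp ti si *m Delta' tj.

Definition Bmx (beta : 'cV[K]_n.+1) (ti : 'I_n.+1) (fi gi fk gk : K)
  : 'M[K]_(n + 2, 2) :=
  col_mx (Delta ti *m beta) (beta ti 0 *: fg fi gi) *m gmf fk gk.

End MatrixNotation.

From mathcomp Require Import all_boot all_order all_algebra ring.
Set Implicit Arguments. Unset Strict Implicit. Unset Printing Implicit Defensive.
Import GRing.Theory.
Local Open Scope ring_scope.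

(* Writing Z_ik = Z_ij Z_jk + (0 B_ijk) and expanding Z_il in the two possible
   ways gives B_ijk S_kl + B_ikl = Z_ij B_jkl + B_ijl.  Every B_abc factors as
   M_a (T'_a^-1 beta_abc) (g_c, -f_c); since (g_k, -f_k) A_kl = det A_kl (g_l, -f_l)
   and Z_ij M_j = M_i, the identity becomes M_i w (g_l, -f_l) = 0 for a linear
   combination w of the vectors T'^-1 beta.  Left multiplication by M_i and right
   multiplication by (g_l, -f_l) are injective because f_i, g_i (resp. f_l, g_l)
   do not both vanish, so w = 0; expressing det A_kl through (e) turns w = 0 into
   the cocycle identity. *)

Lemma det_mx22 (R : comPzRingType) (A : 'M[R]_2) :
  \det A = A 0 0 * A 1 1 - A 0 1 * A 1 0.
Proof.
rewrite (expand_det_row _ 0) !big_ord_recl big_ord0 addr0 /cofactor !det_mx11.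
rewrite !mxE /= expr0 expr1 mul1r mulN1r mulrN.
by congr (A _ _ * A _ _ - A _ _ * A _ _); apply/val_inj.
Qed.

Lemma ord2P (a : 'I_2) : a = 0 \/ a = 1.
Proof. by case: a => [[|[|]]] // p; [left|right]; apply/val_inj. Qed.

Lemma sgnMsgn (K : fieldType) m (t : 'I_m) : sgn t * sgn t = 1 :> K.
Proof. by rewrite /sgn -exprMn mulrNN mulr1 expr1n. Qed.

Section Syzygies.
Variable K : fieldType.
Implicit Types f g : K.

Lemma mulmx_gmf (fk gk fl gl : K) (A : 'M[K]_2) :
  fg fk gk = A *m fg fl gl -> gmf fk gk *m A = \det A *: gmf fl gl.
Proof.
have lift00 : lift ord0 ord0 = 1 :> 'I_2 by apply/val_inj.
move/matrixP=> defA; have := defA 0 0; have := defA 1 0.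
rewrite !mxE !big_ord_recl !big_ord0 !mxE /= lift00 => -> ->.
apply/matrixP=> b a; rewrite ord1 det_mx22.
rewrite !mxE !big_ord_recl !big_ord0 !mxE /= lift00.
by case: (ord2P a) => -> /=; ring.
Qed.

Lemma mulmx_gmf_eq0 m (v : 'cV[K]_m) f g :
  (f != 0) || (g != 0) -> v *m gmf f g = 0 -> v = 0.
Proof.
move=> fg_neq0 /matrixP vfg0; apply/matrixP=> a b; rewrite ord1 [RHS]mxE.
have := vfg0 a 0; have := vfg0 a 1; rewrite !mxE !big_ord1 !mxE /=.
case/orP: fg_neq0 => [f_neq0 /eqP | g_neq0 _ /eqP].
  by rewrite mulrN oppr_eq0 mulf_eq0 (negbTE f_neq0) orbF => /eqP.
by rewrite mulf_eq0 (negbTE g_neq0) orbF => /eqP.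
Qed.

Lemma syzygy_generators_neq0 X (Sh : ratsheaf K X) (V : X -> Prop) f g :
  (forall u v, reg Sh V u -> reg Sh V v -> u * f = v * g ->
     exists2 w, reg Sh V w & u = w * g /\ v = w * f) ->
  (f != 0) || (g != 0).
Proof.
move=> syz; rewrite -negb_and; apply/negP => /andP[/eqP f0 /eqP g0].
have trivial_syz : 1 * f = 0 * g by rewrite f0 g0 !mulr0.
have [w _ [/eqP]] := syz 1 0 (reg1 _ _) (reg0 _ _) trivial_syz.
by rewrite g0 mulr0 oner_eq0.
Qed.

End Syzygies.

Section LocalFrame.
Variables (K : fieldType) (n : nat).
Implicit Types (t : 'I_n.+1) (s : 'I_n.+1 -> K) (f g : K).

(* T'_t = 1 + N with N nilpotent of order two, hence T'_t^-1 = 1 - N. *)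
Lemma Tp_unitmx t s : Tp t s \in unitmx.
Proof.
pose N : 'M[K]_n.+1 := Tp t s - 1%:M.
have N2 : N *m N = 0.
  apply/matrixP=> a b; rewrite !mxE big1 // => c _; rewrite !mxE.
  case: (c =P t) => [->|_]; last by rewrite subrr mul0r.
  by case: (b =P t) => [->|_]; rewrite ?eqxx subrr mulr0.
have: Tp t s *m (1%:M - N) = 1%:M.
  have TpN : Tp t s = 1%:M + N by rewrite addrC subrK.
  by clearbody N; rewrite TpN mulmxDl !mulmxBr N2 !mul1mx mulmx1 subr0 subrK.
by case/mulmx1_unit.
Qed.

Lemma Tp_mul_pivot t s (y : 'cV[K]_n.+1) : (Tp t s *m y) t 0 = y t 0.
Proof.
rewrite !mxE (bigD1 t) //= big1 ?addr0 => [|c ct]; rewrite !mxE ?eqxx ?mul1r //.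
by rewrite (negbTE ct) eq_sym (negbTE ct) mul0r.
Qed.

Lemma Tpp_mul t f g (y : 'cV[K]_n.+1) : Tpp t f g *m y = y t 0 *: fg f g.
Proof.
apply/matrixP=> a b; rewrite ord1 !mxE (bigD1 t) //= big1 ?addr0 => [|c ct].
  by rewrite !mxE eqxx mulrC.
by rewrite !mxE (negbTE ct) mul0r.
Qed.

Lemma Delta_mul t m (y : 'M[K]_(n.+1, m)) : Delta K t *m y = row' t y.
Proof. by rewrite /Delta row'Esub mul_rowsub_mx mul1mx. Qed.

Lemma Bmx_factor (beta : 'cV[K]_n.+1) t s f g fk gk :
  Bmx beta t f g fk gk = Mmx t s f g *m (invmx (Tp t s) *m beta) *m gmf fk gk.
Proof.
rewrite /Bmx /Mmx; congr (_ *m _).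
rewrite mul_col_mx Tpp_mul -mulmxA mulKVmx ?Tp_unitmx //; congr (col_mx _ (_ *: _)).
by rewrite -[RHS](Tp_mul_pivot t s) mulKVmx ?Tp_unitmx.
Qed.

Lemma Mmx_mul_eq0 t s f g (w : 'cV[K]_n.+1) :
  (f != 0) || (g != 0) -> Mmx t s f g *m w = 0 -> w = 0.
Proof.
move=> fg_neq0; rewrite /Mmx mul_col_mx Tpp_mul => /eqP.
rewrite col_mx_eq0 => /andP[/eqP rowsw0 /eqP /matrixP pivw0].
have wt0 : w t 0 = 0.
  apply/eqP; apply: contraTT fg_neq0 => wt_neq0.
  have := pivw0 0 0; have := pivw0 1 0; rewrite !mxE /= => /eqP + /eqP.
  by rewrite !mulf_eq0 (negbTE wt_neq0) /= => -> ->.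
suff Tw0 : Tp t s *m w = 0 by rewrite -(mulKmx (Tp_unitmx t s) w) Tw0 mulmx0.
apply/matrixP=> a b; rewrite ord1 [RHS]mxE.
have [->|/eqP] := a =P t; first by rewrite Tp_mul_pivot wt0.
rewrite eq_sym => /unlift_some[a' -> _].
by move/matrixP: rowsw0 => /(_ a' 0); rewrite -mulmxA Delta_mul !mxE.
Qed.

End LocalFrame.

Lemma cocycle_defect_drsubmx (R : ringType) (I : Type) p q
    (Z : I -> I -> 'M[R]_(p + q)) (B : I -> I -> I -> 'M[R]_(p + q, q)) :
  (forall a b c, Z a c - Z a b *m Z b c = row_mx 0 (B a b c)) ->
  forall i j k l,
    B i j k *m drsubmx (Z k l) + B i k l = Z i j *m B j k l + B i j l.
Proof.
move=> defB i j k l.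
have defZ a b c : Z a c = Z a b *m Z b c + row_mx 0 (B a b c).
  by rewrite -defB addrC subrK.
have: (Z i j *m Z j k + row_mx 0 (B i j k)) *m Z k l + row_mx 0 (B i k l)
    = Z i j *m (Z j k *m Z k l + row_mx 0 (B j k l)) + row_mx 0 (B i j l).
  by rewrite -!defZ.
rewrite mulmxDl mulmxDr mulmxA -!addrA => /addrI.
rewrite -{1}[Z k l]submxK mul_row_block !mul0mx !add0r mul_mx_row mulmx0 !add_row_mx.
by case/eq_row_mx.
Qed.

Theorem proposition12
  (K : fieldType) (X : Type) (Sh : ratsheaf K X)
  (I : Type) (U : I -> X -> Prop)
  (hU_aff : forall i, affine Sh (U i))
  (hU_ne : forall i, exists x, U i x)
  (hU_cov : forall x, exists i, U i x)
  (n : nat) (* r = n + 2 >= 2 *)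
  (* (a) transition functions of L *)
  (h : I -> I -> K)
  (h_unit : forall i j, regunit Sh (cap2 (U i) (U j)) (h i j))
  (h_cocycle : forall i j k, h i j * h j k = h i k)
  (* (b) local generators of the ideal of Y *)
  (f g : I -> K)
  (f_reg : forall i, reg Sh (U i) (f i))
  (g_reg : forall i, reg Sh (U i) (g i))
  (fg_syz : forall i (V : X -> Prop), affine Sh V -> (forall x, V x -> U i x) ->
     forall u v, reg Sh V u -> reg Sh V v -> u * f i = v * g i ->
     exists2 w, reg Sh V w & u = w * g i /\ v = w * f i)
  (* (c) *)
  (A : I -> I -> 'M[K]_2)
  (A_reg : forall i j, regmx Sh (cap2 (U i) (U j)) (A i j))
  (A_fg : forall i j, fg (f i) (g i) = A i j *m fg (f j) (g j))
  (* (d) *)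
  (s : I -> 'I_n.+1 -> K)
  (s_reg : forall i t, reg Sh (U i) (s i t))
  (s_trans : forall i j t, exists a b,
     [/\ reg Sh (cap2 (U i) (U j)) a, reg Sh (cap2 (U i) (U j)) b &
         s i t - \det (A i j) / h i j * s j t = a * f i + b * g i])
  (* (e) *)
  (tt : I -> 'I_n.+1)
  (s_tt : forall i, s i (tt i) = sgn (tt i))
  (s_tt_unit : forall i j, regunit Sh (cap2 (U i) (U j)) (s j (tt i)))
  (detA : forall i j, \det (A i j) = sgn (tt i) * h i j / s j (tt i))
  (* the matrices Z_ij = (P_ij Q_ij ; R_ij S_ij) *)
  (Q : I -> I -> 'M[K]_(n, 2)) (R : I -> I -> 'M[K]_(2, n))
  (Q_reg : forall i j, regmx Sh (cap2 (U i) (U j)) (Q i j))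
  (R_reg : forall i j, regmx Sh (cap2 (U i) (U j)) (R i j))
  (Z := fun i j => block_mx (Pmx (tt i) (tt j) (s i)) (Q i j) (R i j)
                            (sgn (tt j) * s j (tt i) *: A i j))
  (M := fun i => Mmx (tt i) (s i) (f i) (g i))
  (hZ : forall i j, M i = Z i j *m M j)
  (* the beta_ijk *)
  (beta : I -> I -> I -> 'cV[K]_n.+1)
  (beta_reg : forall i j k, regmx Sh (cap3 (U i) (U j) (U k)) (beta i j k))
  (hbeta : forall i j k, Z i k - Z i j *m Z j k =
     row_mx 0 (Bmx (beta i j k) (tt i) (f i) (g i) (f k) (g k))) :
  forall i j k l,
    sgn (tt l) *: (invmx (Tp (tt j) (s j)) *m beta j k l)
  - sgn (tt l) *: (invmx (Tp (tt i) (s i)) *m beta i k l)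
  + sgn (tt l) *: (invmx (Tp (tt i) (s i)) *m beta i j l)
  - (sgn (tt k) * h k l) *: (invmx (Tp (tt i) (s i)) *m beta i j k) = 0.
Proof.
move=> i j k l.
have fg_neq0 a : (f a != 0) || (g a != 0).
  exact: syzygy_generators_neq0 (fg_syz a (U a) (hU_aff a) (fun x Ux => Ux)).
pose y a b c := invmx (Tp (tt a) (s a)) *m beta a b c.
pose lam := sgn (tt l) * s l (tt k) * \det (A k l).
have B_factor a b c : Bmx (beta a b c) (tt a) (f a) (g a) (f c) (g c)
    = M a *m y a b c *m gmf (f c) (g c) by exact: Bmx_factor.
have gmf_S : gmf (f k) (g k) *m drsubmx (Z k l) = lam *: gmf (f l) (g l).
  by rewrite block_mxKdr -scalemxAr (mulmx_gmf (A_fg k l)) scalerA.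
have defect : M i *m (lam *: y i j k + y i k l) *m gmf (f l) (g l)
            = M i *m (y j k l + y i j l) *m gmf (f l) (g l).
  have := cocycle_defect_drsubmx hbeta i j k l.
  rewrite !B_factor -(mulmxA (M i *m y i j k)) gmf_S -scalemxAr.
  by rewrite !(mulmxA (Z i j)) -hZ scalemxAl scalemxAr -!mulmxDl -!mulmxDr.
have cocycle : lam *: y i j k + y i k l = y j k l + y i j l.
  apply/eqP; rewrite -subr_eq0; apply/eqP.
  apply: (Mmx_mul_eq0 (t := tt i) (s := s i) (fg_neq0 i)).
  by apply: (mulmx_gmf_eq0 (fg_neq0 l)); rewrite mulmxBr mulmxBl defect subrr.
have y_ikl : y i k l = y j k l + y i j l - lam *: y i j k.
  by rewrite -cocycle addrAC subrr add0r.
have lamE : sgn (tt k) * h k l = sgn (tt l) * lam.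
  have [_ [s_neq0 _]] := s_tt_unit k l.
  by rewrite /lam detA !mulrA sgnMsgn mul1r [s l _ * _]mulrC mulrAC mulfK.
rewrite lamE -!/(y _ _ _) y_ikl; clearbody y.
by apply/matrixP=> u v; rewrite !mxE; ring.
Qed.
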